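(* For the class $\mathcal{A}=\{A_\rho:\rho\in[0,1]\}$ of MWIS greedy heuristics (adaptive or non-adaptive), there is a distribution over sequences $x_1,\dots,x_T$ of MWIS instances on at most $n$ vertices such that every (possibly randomized) online learning algorithm has expected regret at least $1-o_n(1)$, where $o_n(1)$ is independent of $T$ and tends to $0$ as $n\to\infty$.
   Context: MWIS instance: undirected graph with nonnegative vertex weights. $A_\rho$ repeatedly selects, among vertices not yet selected or blocked, one maximizing $w_v/(1+\deg(v))^\rho$ (ties lexicographic), adds it, and blocks its neighbors; $\deg(v)$ is the original degree (non-adaptive) or the degree in the remaining induced subgraph (adaptive). $\mathrm{cost}(A_\rho,x)\in[0,1]$ is the total weight of the returned independent set (to be maximized). Online learning: at each step $t$ the learner chooses $A_t\in\mathcal{A}$ (possibly randomly) knowing only $x_1,\dots,x_{t-1}$; its regret on $x_1,\dots,x_T$ is $\frac1T\big(\sup_{A\in\mathcal{A}}\sum_{t=1}^T\mathrm{cost}(A,x_t)-\sum_{t=1}^T\mathrm{cost}(A_t,x_t)\big)$. *)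

From Stdlib Require Import Reals Lra List Arith ClassicalEpsilon.
Import ListNotations.
Open Scope R_scope.

(* An MWIS instance: vertices 0..nv-1, weights wt, adjacency adj. *)
Record Inst := mkInst { nv : nat; wt : nat -> R; adj : nat -> nat -> bool }.

Definition wf_inst (x : Inst) : Prop :=
  (forall v, (v < nv x)%nat -> 0 <= wt x v) /\
  (forall u v, (u < nv x)%nat -> (v < nv x)%nat -> adj x u v = adj x v u) /\
  (forall v, (v < nv x)%nat -> adj x v v = false).

Definition orig_deg (x : Inst) (u : nat) : nat :=
  length (filter (adj x u) (seq 0 (nv x))).

(* among cur :: l, the first (smallest-position) maximizer of score;
   lists are kept in increasing vertex order, so ties are broken
   lexicographically (smallest index wins). *)
Fixpoint best (score : nat -> R) (l : list nat) (cur : nat) : nat :=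
  match l with
  | [] => cur
  | v :: l' => if Rlt_dec (score cur) (score v) then best score l' v
               else best score l' cur
  end.

(* Greedy A_rho: returns total weight of the selected independent set.
   [avail] = vertices neither selected nor blocked (increasing order). *)
Fixpoint greedy (fuel : nat) (adaptive : bool) (rho : R) (x : Inst)
    (avail : list nat) : R :=
  match fuel with
  | O => 0
  | S f =>
    match avail with
    | [] => 0
    | v0 :: rest =>
      let deg u := if adaptive then length (filter (adj x u) avail)
                   else orig_deg x u in
      let sc u := wt x u / Rpower (1 + INR (deg u)) rho in
      let v := best sc rest v0 in
      wt x v + greedy f adaptive rho x
                 (filter (fun u => andb (negb (Nat.eqb u v)) (negb (adj x v u))) avail)
    end
  end.

Definition cost (adaptive : bool) (rho : R) (x : Inst) : R :=
  greedy (nv x) adaptive rho x (seq 0 (nv x)).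

Definition Rsup (E : R -> Prop) : R :=
  epsilon (inhabits 0) (fun s => is_lub E s).

Definition best_fixed (adaptive : bool) (xs : list Inst) : R :=
  Rsup (fun s => exists rho, 0 <= rho <= 1 /\
          s = fold_right Rplus 0 (map (cost adaptive rho) xs)).

Definition learner_total {Omega : Type} (adaptive : bool)
    (L : list Inst -> Omega -> R) (xs : list Inst) (w : Omega) : R :=
  fold_right Rplus 0
    (map (fun t => cost adaptive (L (firstn t xs) w) (nth t xs (mkInst 0 (fun _ => 0) (fun _ _ => false))))
         (seq 0 (length xs))).

Definition bounded_fun {Omega : Type} (f : Omega -> R) : Prop :=
  exists M, forall w, Rabs (f w) <= M.

(* Expectation over the learner's internal randomness: a normalized,
   monotone, linear functional on bounded functions (every probability
   measure induces one, by Hahn--Banach extension of its integral). *)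
Definition is_expectation {Omega : Type} (E : (Omega -> R) -> R) : Prop :=
  (forall c, E (fun _ => c) = c) /\
  (forall f g, bounded_fun f -> bounded_fun g ->
     E (fun w => f w + g w) = E f + E g) /\
  (forall c f, bounded_fun f -> E (fun w => c * f w) = c * E f) /\
  (forall f g, bounded_fun f -> bounded_fun g ->
     (forall w, f w <= g w) -> E f <= E g).

Definition valid_dist (adaptive : bool) (n T : nat) (D : list (R * list Inst)) : Prop :=
  (forall p xs, In (p, xs) D ->
     0 <= p /\ length xs = T /\
     (forall x, In x xs -> wf_inst x /\ (nv x <= n)%nat /\
        forall rho, 0 <= rho <= 1 -> 0 <= cost adaptive rho x <= 1)) /\
  fold_right Rplus 0 (map fst D) = 1.

Definition expected_regret {Omega : Type} (adaptive : bool) (T : nat)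
    (D : list (R * list Inst)) (E : (Omega -> R) -> R)
    (L : list Inst -> Omega -> R) : R :=
  / INR T * fold_right Rplus 0
    (map (fun pxs => fst pxs *
            (best_fixed adaptive (snd pxs) - E (learner_total adaptive L (snd pxs))))
         D).

From Stdlib Require Import Reals List Lra Lia ClassicalEpsilon FunctionalExtensionality.
Import ListNotations.
Open Scope R_scope.

(* The gadget G(a, b) has three mutually adjacent hubs p, q, r and m pairwise non-adjacent
   leaves that are adjacent to p and r but not to q.  Greedy first picks a hub, and the
   weights make it pick q exactly when a < rho < b: then all leaves survive and the
   independent set weighs 1, whereas picking p or r blocks the leaves and earns at most
   3/(m+2).  Only this first choice matters, and there adaptive and original degrees agree.

   The hard distribution draws, at every step, the gadget of a uniformly random one of
   k = n + 1 disjoint closed subintervals of the current interval and recurses inside it.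
   The learner commits to rho_t before x_t is drawn, and rho_t lies in at most one of these
   subintervals, so its expected cost per step is at most 1/k + 3/(m+2).  Every sequence in
   the support, however, has a common rho (in its innermost interval) of cost 1 on all of
   its instances, so the regret is at least 1 - 13/(n+1). *)

(** * Finite sums *)

Definition sumR {A : Type} (f : A -> R) (l : list A) : R := fold_right Rplus 0 (map f l).

Section ListSums.
Context {A : Type}.
Implicit Types (f g : A -> R) (l : list A).

Lemma sumR_app f l1 l2 : sumR f (l1 ++ l2) = sumR f l1 + sumR f l2.
Proof. unfold sumR; induction l1; simpl; [lra | rewrite IHl1; lra]. Qed.

Lemma sumR_ext f g l : (forall x, In x l -> f x = g x) -> sumR f l = sumR g l.
Proof. intro H; unfold sumR; f_equal; apply map_ext_in; auto. Qed.

Lemma sumR_le f g l : (forall x, In x l -> f x <= g x) -> sumR f l <= sumR g l.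
Proof.
  unfold sumR; induction l; simpl; intros H; [lra|].
  apply Rplus_le_compat; [apply H; auto | apply IHl; intros; apply H; auto].
Qed.

Lemma sumR_lin c1 c2 f g l :
  sumR (fun x => c1 * f x + c2 * g x) l = c1 * sumR f l + c2 * sumR g l.
Proof. unfold sumR; induction l; simpl; [ring | rewrite IHl; ring]. Qed.

Lemma sumR_scal c f l : sumR (fun x => c * f x) l = c * sumR f l.
Proof. unfold sumR; induction l; simpl; [ring | rewrite IHl; ring]. Qed.

Lemma sumR_const c l : sumR (fun _ => c) l = INR (length l) * c.
Proof.
  unfold sumR; induction l as [|x l IH]; [simpl; ring|].
  cbn [map fold_right length]; rewrite IH, S_INR; ring.
Qed.

Lemma sumR_repeat f (c : A) k : sumR f (repeat c k) = INR k * f c.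
Proof.
  rewrite (sumR_ext f (fun _ => f c)), sumR_const, repeat_length; [reflexivity|].
  intros x Hx; apply repeat_spec in Hx; subst; reflexivity.
Qed.

Lemma sumR_zero f l : (forall x, In x l -> f x = 0) -> sumR f l = 0.
Proof. intro H; rewrite (sumR_ext f (fun _ => 0)), sumR_const by auto; ring. Qed.

Lemma sumR_filter f (k : A -> bool) l :
  sumR f l = sumR f (filter k l) + sumR f (filter (fun u => negb (k u)) l).
Proof. unfold sumR; induction l as [|a l IH]; simpl; [lra|]. destruct (k a); simpl; rewrite IH; lra. Qed.

Lemma sumR_filter_ind f (k : A -> bool) l :
  sumR f (filter k l) = sumR (fun y => if k y then f y else 0) l.
Proof. unfold sumR; induction l as [|a l IH]; simpl; auto. destruct (k a); simpl; rewrite IH; lra. Qed.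

Lemma sumR_map {B : Type} f (g : B -> A) (l : list B) : sumR f (map g l) = sumR (fun y => f (g y)) l.
Proof. unfold sumR; rewrite map_map; reflexivity. Qed.

Lemma sumR_flat_map {B : Type} f (g : B -> list A) (l : list B) :
  sumR f (flat_map g l) = sumR (fun j => sumR f (g j)) l.
Proof. induction l; simpl; [reflexivity|]. rewrite sumR_app, IHl; reflexivity. Qed.

End ListSums.

Lemma sumR_single (f : nat -> R) v l : NoDup l -> In v l ->
  (forall u, In u l -> u <> v -> f u = 0) -> sumR f l = f v.
Proof.
  induction l as [|a l IH]; intros Hnd Hin H0; [destruct Hin|].
  inversion Hnd as [|? ? Ha Hnd']; subst. unfold sumR; simpl; fold (sumR f l).
  destruct Hin as [<-|Hin].
  - rewrite sumR_zero; [lra|]. intros u Hu; apply H0; [right; auto | intros ->; contradiction].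
  - rewrite H0, IH; auto; [lra | | left; reflexivity | intros ->; contradiction].
    intros u Hu Hne; apply H0; auto; right; auto.
Qed.

Lemma filter_length_lt {A : Type} (k : A -> bool) l v :
  In v l -> k v = false -> (length (filter k l) < length l)%nat.
Proof.
  induction l as [|a l IH]; intros Hin Hk; [destruct Hin|]. simpl.
  pose proof (filter_length_le k l).
  destruct Hin as [<-|Hin]; [rewrite Hk; simpl; lia|].
  specialize (IH Hin Hk). destruct (k a); simpl; lia.
Qed.

(** * The greedy heuristic *)

Lemma best_in sc l cur : In (best sc l cur) (cur :: l).
Proof.
  revert cur; induction l as [|v l IH]; intro cur; simpl; [auto|].
  destruct (Rlt_dec (sc cur) (sc v)).
  - destruct (IH v) as [H|H]; simpl; auto.
  - destruct (IH cur) as [H|H]; simpl; auto.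
Qed.

Lemma best_max sc l cur y : In y (cur :: l) -> sc y <= sc (best sc l cur).
Proof.
  revert cur y; induction l as [|v l IH]; intros cur y Hy; simpl.
  - destruct Hy as [<-|[]]; lra.
  - destruct (Rlt_dec (sc cur) (sc v)).
    + destruct Hy as [<-|Hy]; [specialize (IH v v (or_introl eq_refl)); lra | apply IH; exact Hy].
    + destruct Hy as [<-|[<-|Hy]].
      * apply IH; left; reflexivity.
      * specialize (IH cur cur (or_introl eq_refl)); lra.
      * apply IH; right; exact Hy.
Qed.

Definition greedy_score (ad : bool) (rho : R) (x : Inst) (avail : list nat) (u : nat) : R :=
  wt x u / Rpower (1 + INR (if ad then length (filter (adj x u) avail) else orig_deg x u)) rho.

Definition greedy_pick (ad : bool) (rho : R) (x : Inst) (v0 : nat) (rest : list nat) : nat :=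
  best (greedy_score ad rho x (v0 :: rest)) rest v0.

Definition survivors (x : Inst) (v : nat) (avail : list nat) : list nat :=
  filter (fun u => negb (u =? v)%nat && negb (adj x v u))%bool avail.

Lemma greedy_step f ad rho x v0 rest :
  let v := greedy_pick ad rho x v0 rest in
  greedy (S f) ad rho x (v0 :: rest) = wt x v + greedy f ad rho x (survivors x v (v0 :: rest)).
Proof. reflexivity. Qed.

Lemma greedy_score_pos ad rho x avail u : 0 < wt x u -> 0 < greedy_score ad rho x avail u.
Proof. intro H; apply Rdiv_lt_0_compat; [exact H | apply exp_pos]. Qed.

Lemma greedy_pick_weightless ad rho x v0 rest :
  (forall u, In u (v0 :: rest) -> 0 <= wt x u) ->
  wt x (greedy_pick ad rho x v0 rest) <= 0 -> forall u, In u (v0 :: rest) -> wt x u = 0.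
Proof.
  intros Hw Hv u Hu.
  destruct (Rle_lt_or_eq _ _ (Hw u Hu)) as [Hpos|]; [exfalso | auto].
  pose proof (best_max (greedy_score ad rho x (v0 :: rest)) rest v0 u Hu) as Hmax.
  pose proof (greedy_score_pos ad rho x (v0 :: rest) u Hpos).
  assert (Hpick : wt x (greedy_pick ad rho x v0 rest) = 0)
    by (pose proof (Hw _ (best_in (greedy_score ad rho x (v0 :: rest)) rest v0));
        unfold greedy_pick in *; lra).
  fold (greedy_pick ad rho x v0 rest) in Hmax; unfold greedy_score at 2 in Hmax; rewrite Hpick in Hmax.
  unfold Rdiv in Hmax; rewrite Rmult_0_l in Hmax; lra.
Qed.

Lemma greedy_independent fuel ad rho x avail :
  (length avail <= fuel)%nat -> NoDup avail ->
  (forall v, In v avail -> 0 <= wt x v) ->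
  (forall u v, In u avail -> In v avail -> 0 < wt x u -> 0 < wt x v -> adj x u v = false) ->
  greedy fuel ad rho x avail = sumR (wt x) avail.
Proof.
  revert avail; induction fuel as [|fuel IH]; intros avail Hlen Hnd Hw Hind.
  - destruct avail; [reflexivity | simpl in Hlen; lia].
  - destruct avail as [|v0 rest]; [reflexivity|].
    rewrite greedy_step; set (v := greedy_pick ad rho x v0 rest).
    assert (Hv : In v (v0 :: rest)) by apply best_in.
    set (keep := fun u => (negb (u =? v)%nat && negb (adj x v u))%bool).
    assert (Hkv : keep v = false) by (unfold keep; rewrite Nat.eqb_refl; reflexivity).
    rewrite IH.
    + unfold survivors; fold keep; rewrite (sumR_filter (wt x) keep (v0 :: rest)).
      destruct (Rlt_or_le 0 (wt x v)) as [Hpos|Hnpos].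
      * rewrite (sumR_single (wt x) v (filter (fun u => negb (keep u)) (v0 :: rest)));
          [lra | apply NoDup_filter; auto
          | apply filter_In; rewrite Hkv; auto |].
        intros u Hu Hne; apply filter_In in Hu as [Hu Hku].
        unfold keep in Hku; apply Nat.eqb_neq in Hne; rewrite Hne in Hku; simpl in Hku.
        destruct (Rle_lt_or_eq _ _ (Hw u Hu)) as [Hu'|]; [|auto].
        rewrite (Hind v u) in Hku; auto; discriminate.
      * pose proof (greedy_pick_weightless ad rho x v0 rest Hw Hnpos) as Hzero.
        rewrite !sumR_zero; [rewrite (Hzero v Hv); lra | |];
          intros u Hu; apply filter_In in Hu as [Hu _]; auto.
    + pose proof (filter_length_lt keep (v0 :: rest) v Hv Hkv).
      unfold survivors; fold keep; lia.
    + apply NoDup_filter; auto.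
    + intros u Hu; apply filter_In in Hu as [Hu _]; auto.
    + intros u w Hu Hw'; apply filter_In in Hu as [Hu _]; apply filter_In in Hw' as [Hw' _]; auto.
Qed.

(** * The gadget *)

Ltac case_nat_tests := repeat match goal with
 | |- context [Nat.eqb ?a ?b] => destruct (Nat.eqb_spec a b)
 | |- context [Nat.ltb ?a ?b] => destruct (Nat.ltb_spec a b)
 | H: context [Nat.eqb ?a ?b] |- _ => destruct (Nat.eqb_spec a b)
 | H: context [Nat.ltb ?a ?b] |- _ => destruct (Nat.ltb_spec a b) end.

(* Vertex classes of the gadget: the hubs p, q, r are the vertices 0, 1, 2; class 3 holds
   the m leaves; classes 4 (two vertices) and 5 (m+1 vertices) are weightless padding
   that only adjusts the degrees of the hubs and leaves. *)
Definition vclass (m v : nat) : nat :=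
  if (v =? 0)%nat then 0%nat else if (v =? 1)%nat then 1%nat else if (v =? 2)%nat then 2%nat
  else if (v <? 3 + m)%nat then 3%nat else if (v <? 5 + m)%nat then 4%nat
  else if (v <? 6 + (m + m))%nat then 5%nat else 6%nat.

Definition class_adj (c1 c2 : nat) : bool :=
  match c1, c2 with
  | 0, 1 | 0, 2 | 0, 3 | 0, 4 => true
  | 1, 0 | 1, 2 | 1, 5 => true
  | 2, 0 | 2, 1 | 2, 3 => true
  | 3, 0 | 3, 2 | 3, 4 | 3, 5 => true
  | 4, 0 | 4, 3 => true
  | 5, 1 | 5, 3 => true
  | _, _ => false
  end%nat.

Definition gadget_size (m : nat) : nat := 6 + (m + m).

Definition leaf_wt (m : nat) : R := / (INR m + 2).
Definition hub_wt (m : nat) : R := 2 * leaf_wt m.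
Definition alpha (m : nat) : R := ln (INR m + 5) - ln (INR m + 4).
Definition gamma (m : nat) : R := ln (INR m + 4) - ln (INR m + 3).

(* q together with the leaves weighs exactly 1.  As 1 + deg is m+5, m+4, m+3 for p, q, r,
   the factors exp(a alpha) and exp(-b gamma) make the score of p (resp. r) overtake that
   of q exactly when rho < a (resp. rho > b). *)
Definition class_wt (m : nat) (a b : R) (c : nat) : R :=
  match c with
  | O => hub_wt m * exp (a * alpha m)
  | 1%nat => hub_wt m
  | 2%nat => hub_wt m * exp (- (b * gamma m))
  | 3%nat => leaf_wt m
  | _ => 0
  end.

Definition gadget (m : nat) (a b : R) : Inst :=
  mkInst (gadget_size m) (fun v => class_wt m a b (vclass m v))
    (fun u v => class_adj (vclass m u) (vclass m v)).

Definition class_deg (m c : nat) : nat :=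
  length (filter (class_adj c) (map (vclass m) (seq 0 (gadget_size m)))).

Definition class_score (m : nat) (a b rho : R) (c : nat) : R :=
  class_wt m a b c / Rpower (1 + INR (class_deg m c)) rho.

Lemma class_adj_sym c1 c2 : class_adj c1 c2 = class_adj c2 c1.
Proof. destruct c1 as [|[|[|[|[|[|c1]]]]]]; destruct c2 as [|[|[|[|[|[|c2]]]]]]; reflexivity. Qed.

Lemma class_adj_irrefl c : class_adj c c = false.
Proof. destruct c as [|[|[|[|[|[|c]]]]]]; reflexivity. Qed.

Lemma vclass_hub m y c : (c < 3)%nat -> vclass m y = c -> y = c.
Proof. intros Hc H; unfold vclass in H; case_nat_tests; simpl in *; lia. Qed.

Lemma map_vclass_block m lo len c : (forall z, (lo <= z < lo + len)%nat -> vclass m z = c) ->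
  map (vclass m) (seq lo len) = repeat c len.
Proof.
  intro H. rewrite (map_ext_in _ (fun _ => c)), map_const, length_seq; [reflexivity|].
  intros y Hy; apply in_seq in Hy; apply H; lia.
Qed.

Lemma vclass_seq m : map (vclass m) (seq 0 (gadget_size m)) =
  [0; 1; 2]%nat ++ repeat 3%nat m ++ repeat 4%nat 2 ++ repeat 5%nat (S m).
Proof.
  replace (gadget_size m) with (3 + (m + (2 + S m)))%nat by (unfold gadget_size; lia).
  rewrite !seq_app, !map_app; simpl (0 + 3)%nat.
  rewrite (map_vclass_block m 3 m 3), (map_vclass_block m (3 + m) 2 4),
    (map_vclass_block m (3 + m + 2) (S m) 5); [reflexivity | ..];
    intros z Hz; unfold vclass; case_nat_tests; simpl; lia.
Qed.

Lemma class_deg_values m :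
  class_deg m 0 = (m + 4)%nat /\ class_deg m 1 = (m + 3)%nat /\
  class_deg m 2 = (m + 2)%nat /\ class_deg m 3 = (m + 5)%nat.
Proof.
  assert (Hrep : forall (t : nat -> bool) c k, filter t (repeat c k) = if t c then repeat c k else []).
  { intros t c k; induction k; simpl; destruct (t c); simpl; auto; rewrite IHk; auto. }
  unfold class_deg; rewrite vclass_seq, !filter_app, !Hrep; simpl.
  rewrite ?length_app, ?repeat_length; simpl; repeat split; lia.
Qed.

Lemma orig_deg_gadget m a b y : orig_deg (gadget m a b) y = class_deg m (vclass m y).
Proof.
  unfold orig_deg, class_deg; simpl nv. generalize (seq 0 (gadget_size m)).
  induction l as [|z l IH]; simpl; [reflexivity|].
  destruct (class_adj (vclass m y) (vclass m z)); simpl; auto.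
Qed.

Lemma leaf_wt_pos m : 0 < leaf_wt m.
Proof. unfold leaf_wt; apply Rinv_0_lt_compat; pose proof (pos_INR m); lra. Qed.

Lemma class_wt_nonneg m a b c : 0 <= class_wt m a b c.
Proof.
  pose proof (leaf_wt_pos m). pose proof (exp_pos (a * alpha m)). pose proof (exp_pos (- (b * gamma m))).
  destruct c as [|[|[|[|c]]]]; cbn [class_wt]; unfold hub_wt; nra.
Qed.

Lemma gadget_wf m a b : wf_inst (gadget m a b).
Proof.
  split; [|split]; simpl; intros.
  - apply class_wt_nonneg.
  - apply class_adj_sym.
  - apply class_adj_irrefl.
Qed.

Lemma ln_shifts_increasing m :
  0 < ln (INR m + 3) < ln (INR m + 4) /\ ln (INR m + 4) < ln (INR m + 5) < ln (INR m + 6).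
Proof. pose proof (pos_INR m). rewrite <- ln_1. repeat split; apply ln_increasing; lra. Qed.

Lemma alpha_pos m : 0 < alpha m.
Proof. unfold alpha; pose proof (ln_shifts_increasing m); lra. Qed.

Lemma gamma_pos m : 0 < gamma m.
Proof. unfold gamma; pose proof (ln_shifts_increasing m); lra. Qed.

Lemma div_Rpower w x rho : w / Rpower x rho = w * exp (- (rho * ln x)).
Proof. unfold Rpower, Rdiv; rewrite exp_Ropp; reflexivity. Qed.

Lemma class_score_q m a b rho : class_score m a b rho 1 = hub_wt m * exp (- (rho * ln (INR m + 4))).
Proof.
  unfold class_score; rewrite (proj1 (proj2 (class_deg_values m))), div_Rpower.
  replace (1 + INR (m + 3)) with (INR m + 4) by (rewrite plus_INR; simpl; ring); reflexivity.
Qed.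

Lemma class_score_p m a b rho :
  class_score m a b rho 0 = class_score m a b rho 1 * exp ((a - rho) * alpha m).
Proof.
  rewrite class_score_q; unfold class_score; rewrite (proj1 (class_deg_values m)), div_Rpower.
  replace (1 + INR (m + 4)) with (INR m + 5) by (rewrite plus_INR; simpl; ring).
  cbn [class_wt]; rewrite !Rmult_assoc, <- !exp_plus; unfold alpha; do 2 f_equal; ring.
Qed.

Lemma class_score_r m a b rho :
  class_score m a b rho 2 = class_score m a b rho 1 * exp ((rho - b) * gamma m).
Proof.
  rewrite class_score_q; unfold class_score; rewrite (proj1 (proj2 (proj2 (class_deg_values m)))), div_Rpower.
  replace (1 + INR (m + 2)) with (INR m + 3) by (rewrite plus_INR; simpl; ring).
  cbn [class_wt]; rewrite !Rmult_assoc, <- !exp_plus; unfold gamma; do 2 f_equal; ring.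
Qed.

Lemma class_score_q_pos m a b rho : 0 < class_score m a b rho 1.
Proof.
  rewrite class_score_q; unfold hub_wt; pose proof (leaf_wt_pos m).
  pose proof (exp_pos (- (rho * ln (INR m + 4)))); nra.
Qed.

Lemma class_score_leaf_lt_q m a b rho : 0 <= rho -> class_score m a b rho 3 < class_score m a b rho 1.
Proof.
  intro Hr. rewrite class_score_q; unfold class_score.
  rewrite (proj2 (proj2 (proj2 (class_deg_values m)))), div_Rpower; cbn [class_wt].
  replace (1 + INR (m + 5)) with (INR m + 6) by (rewrite plus_INR; simpl; ring).
  pose proof (leaf_wt_pos m). pose proof (ln_shifts_increasing m).
  assert (exp (- (rho * ln (INR m + 6))) <= exp (- (rho * ln (INR m + 4)))).
  { destruct (Rle_lt_or_eq _ _ Hr) as [Hr'|<-]; [|right; f_equal; ring].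
    left; apply exp_increasing; apply Ropp_lt_contravar, Rmult_lt_compat_l; lra. }
  pose proof (exp_pos (- (rho * ln (INR m + 6)))). unfold hub_wt; nra.
Qed.

Lemma class_score_padding m a b rho c : (4 <= c)%nat -> class_score m a b rho c = 0.
Proof.
  intro Hc; unfold class_score; destruct c as [|[|[|[|c]]]]; try lia; simpl; unfold Rdiv; ring.
Qed.

Lemma vclass_of_hub m c : (c < 3)%nat -> vclass m c = c.
Proof. intro Hc; destruct c as [|[|[|c]]]; [reflexivity .. | lia]. Qed.

Lemma vclass_eqb_hub m v y : (v < 3)%nat -> (vclass m y =? v)%nat = (y =? v)%nat.
Proof.
  intro Hv; destruct (Nat.eqb_spec y v) as [->|Hne]; [rewrite vclass_of_hub, Nat.eqb_refl; auto|].
  apply Nat.eqb_neq; intro He; apply Hne; exact (vclass_hub m y v Hv He).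
Qed.

Lemma greedy_score_gadget ad rho m a b u :
  greedy_score ad rho (gadget m a b) (seq 0 (gadget_size m)) u = class_score m a b rho (vclass m u).
Proof. unfold greedy_score, class_score; rewrite <- (orig_deg_gadget m a b); destruct ad; reflexivity. Qed.

Lemma gadget_first_pick m a b ad rho : 0 <= rho ->
  let v := greedy_pick ad rho (gadget m a b) 0 (seq 1 (5 + (m + m))) in
  (v < 3)%nat /\ forall c, (c < 3)%nat -> class_score m a b rho c <= class_score m a b rho v.
Proof.
  intros Hr v.
  assert (Hmax : forall y, (y < gadget_size m)%nat ->
            class_score m a b rho (vclass m y) <= class_score m a b rho (vclass m v)).
  { intros y Hy; rewrite <- !greedy_score_gadget with (ad := ad).
    apply best_max; change (In y (seq 0 (gadget_size m))); apply in_seq; lia. }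
  assert (Hv : (vclass m v < 3)%nat).
  { pose proof (Hmax 1%nat ltac:(unfold gadget_size; lia)) as Hq.
    rewrite (vclass_of_hub m 1) in Hq by lia.
    pose proof (class_score_q_pos m a b rho).
    destruct (Nat.lt_ge_cases (vclass m v) 3) as [|Hge]; [auto | exfalso].
    destruct (Nat.eq_dec (vclass m v) 3) as [E|].
    - rewrite E in Hq; pose proof (class_score_leaf_lt_q m a b rho Hr); lra.
    - rewrite (class_score_padding m a b rho (vclass m v)) in Hq by lia; lra. }
  rewrite (vclass_hub m v (vclass m v) Hv eq_refl).
  split; [exact Hv|]. intros c Hc.
  rewrite <- (vclass_of_hub m c Hc); apply Hmax; unfold gadget_size; lia.
Qed.

Lemma gadget_survivors_weight m a b v : (v < 3)%nat ->
  sumR (wt (gadget m a b)) (survivors (gadget m a b) v (seq 0 (gadget_size m))) =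
  if (v =? 1)%nat then INR m * leaf_wt m else 0.
Proof.
  intro Hv. unfold survivors; rewrite sumR_filter_ind.
  set (h := fun c => if (negb (c =? v)%nat && negb (class_adj v c))%bool then class_wt m a b c else 0).
  rewrite (sumR_ext _ (fun y => h (vclass m y))).
  - rewrite <- (sumR_map h), vclass_seq, !sumR_app, !sumR_repeat.
    destruct v as [|[|[|v]]]; [..|lia]; unfold sumR, h; simpl; ring.
  - intros y _; unfold h; cbn [wt adj gadget].
    rewrite vclass_of_hub, vclass_eqb_hub by exact Hv; reflexivity.
Qed.

Lemma gadget_survivor_is_leaf m a b v u : (v < 3)%nat ->
  In u (survivors (gadget m a b) v (seq 0 (gadget_size m))) -> 0 < wt (gadget m a b) u ->
  vclass m u = 3%nat.
Proof.
  intros Hv Hu Hpos; apply filter_In in Hu as [_ Hkeep]; cbn [wt adj gadget] in *.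
  rewrite vclass_of_hub in Hkeep by exact Hv; rewrite <- (vclass_eqb_hub m v u Hv) in Hkeep.
  destruct (Nat.le_gt_cases (vclass m u) 3) as [Hle|Hgt].
  - destruct v as [|[|[|v]]]; [..|lia];
      destruct (vclass m u) as [|[|[|[|c]]]]; simpl in Hkeep; try discriminate; lia.
  - destruct (vclass m u) as [|[|[|[|c]]]]; [lia .. | simpl in Hpos; lra].
Qed.

Lemma gadget_cost m a b ad rho : 0 <= rho ->
  exists v, (v < 3)%nat /\
    (forall c, (c < 3)%nat -> class_score m a b rho c <= class_score m a b rho v) /\
    cost ad rho (gadget m a b) = class_wt m a b v + if (v =? 1)%nat then INR m * leaf_wt m else 0.
Proof.
  intro Hr. destruct (gadget_first_pick m a b ad rho Hr) as [Hv Hmax].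
  set (v := greedy_pick ad rho (gadget m a b) 0 (seq 1 (5 + (m + m)))) in *.
  exists v; split; [exact Hv | split; [exact Hmax|]].
  unfold cost; change (seq 0 (nv (gadget m a b))) with (0%nat :: seq 1 (5 + (m + m))).
  change (nv (gadget m a b)) with (S (5 + (m + m))).
  rewrite greedy_step; fold v; cbn [wt gadget]; rewrite vclass_of_hub by exact Hv; f_equal.
  change (0%nat :: seq 1 (5 + (m + m))) with (seq 0 (gadget_size m)).
  assert (Hin : In v (seq 0 (gadget_size m))) by apply best_in.
  rewrite greedy_independent; [apply gadget_survivors_weight; exact Hv | | | |].
  - pose proof (filter_length_lt (fun u => negb (u =? v)%nat && negb (adj (gadget m a b) v u))%bool
                  _ v Hin ltac:(cbv beta; rewrite Nat.eqb_refl; reflexivity)) as Hlt.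
    rewrite length_seq in Hlt; unfold survivors, gadget_size in *; lia.
  - apply NoDup_filter, seq_NoDup.
  - intros; apply class_wt_nonneg.
  - intros u w Hu Hw Pu Pw; cbn [adj gadget].
    rewrite (gadget_survivor_is_leaf m a b v u Hv Hu Pu), (gadget_survivor_is_leaf m a b v w Hv Hw Pw).
    reflexivity.
Qed.

Lemma mul_exp_lt s t : 0 < s -> t < 0 -> s * exp t < s.
Proof.
  intros Hs Ht; pose proof (exp_increasing t 0 Ht); rewrite exp_0 in *; nra.
Qed.

Lemma mul_exp_gt s t : 0 < s -> 0 < t -> s < s * exp t.
Proof.
  intros Hs Ht; pose proof (exp_increasing 0 t Ht); rewrite exp_0 in *; nra.
Qed.

Section GadgetCost.
Variables (m : nat) (a b : R) (ad : bool) (rho : R).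
Hypotheses (Hm : (1 <= m)%nat) (Ha : 0 <= a <= 1) (Hb : 0 <= b <= 1) (Hr : 0 <= rho).

Lemma three_leaf_wt_le_1 : 3 * leaf_wt m <= 1.
Proof.
  apply le_INR in Hm; simpl in Hm; unfold leaf_wt.
  apply Rmult_le_reg_r with (INR m + 2); [lra|]. rewrite Rmult_assoc, Rinv_l; lra.
Qed.

Lemma q_and_leaves_wt : class_wt m a b 1 + INR m * leaf_wt m = 1.
Proof. cbn [class_wt]; unfold hub_wt, leaf_wt; field; pose proof (pos_INR m); lra. Qed.

Lemma side_hub_wt_le c : (c = 0 \/ c = 2)%nat -> class_wt m a b c <= 3 * leaf_wt m.
Proof.
  pose proof (leaf_wt_pos m); pose proof (pos_INR m).
  intros [-> | ->]; cbn [class_wt]; unfold hub_wt.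
  - assert (Halpha : exp (alpha m) = (INR m + 5) / (INR m + 4)).
    { unfold alpha, Rminus; rewrite exp_plus, exp_Ropp, !exp_ln by lra; reflexivity. }
    assert (exp (a * alpha m) <= exp (alpha m)).
    { pose proof (alpha_pos m). destruct (Rle_lt_or_eq _ _ (proj2 Ha)) as [Hlt | ->].
      - left; apply exp_increasing; nra.
      - right; f_equal; ring. }
    assert ((INR m + 5) / (INR m + 4) <= 3 / 2).
    { apply Rmult_le_reg_r with (INR m + 4); [lra|]. unfold Rdiv; rewrite Rmult_assoc, Rinv_l; lra. }
    nra.
  - assert (exp (- (b * gamma m)) <= 1).
    { rewrite <- exp_0; pose proof (gamma_pos m). destruct (Rle_lt_or_eq _ _ (proj1 Hb)) as [Hlt | <-].
      - left; apply exp_increasing; nra.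
      - right; f_equal; ring. }
    pose proof (exp_pos (- (b * gamma m))); nra.
Qed.

Lemma gadget_cost_range : 0 <= cost ad rho (gadget m a b) <= 1.
Proof.
  destruct (gadget_cost m a b ad rho Hr) as (v & Hv & _ & ->).
  pose proof three_leaf_wt_le_1; pose proof (class_wt_nonneg m a b v).
  destruct (Nat.eq_dec v 1) as [-> | Hne]; [rewrite Nat.eqb_refl, q_and_leaves_wt; lra|].
  rewrite (proj2 (Nat.eqb_neq v 1) Hne), Rplus_0_r.
  pose proof (side_hub_wt_le v ltac:(lia)); lra.
Qed.

Lemma gadget_cost_inside : a < rho < b -> cost ad rho (gadget m a b) = 1.
Proof using Hr.
  clear Hm Ha Hb; intros [Har Hrb]. destruct (gadget_cost m a b ad rho Hr) as (v & Hv & Hmax & ->).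
  pose proof (class_score_q_pos m a b rho) as Hq.
  assert (Hv1 : v = 1%nat).
  { specialize (Hmax 1%nat ltac:(lia)).
    destruct v as [|[|[|v]]]; [exfalso | reflexivity | exfalso | lia].
    - rewrite class_score_p in Hmax; pose proof (mul_exp_lt _ ((a - rho) * alpha m) Hq).
      pose proof (alpha_pos m); assert ((a - rho) * alpha m < 0) by nra; intuition lra.
    - rewrite class_score_r in Hmax; pose proof (mul_exp_lt _ ((rho - b) * gamma m) Hq).
      pose proof (gamma_pos m); assert ((rho - b) * gamma m < 0) by nra; intuition lra. }
  subst v; rewrite Nat.eqb_refl; exact q_and_leaves_wt.
Qed.

Lemma gadget_cost_outside : rho < a \/ b < rho -> cost ad rho (gadget m a b) <= 3 * leaf_wt m.
Proof using Ha Hb Hr.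
  clear Hm; intros Hout. destruct (gadget_cost m a b ad rho Hr) as (v & Hv & Hmax & ->).
  pose proof (class_score_q_pos m a b rho) as Hq.
  assert (Hv1 : v <> 1%nat).
  { intros ->. destruct Hout as [Hra | Hbr].
    - specialize (Hmax 0%nat ltac:(lia)); rewrite class_score_p in Hmax.
      pose proof (alpha_pos m); pose proof (mul_exp_gt _ ((a - rho) * alpha m) Hq ltac:(nra)); lra.
    - specialize (Hmax 2%nat ltac:(lia)); rewrite class_score_r in Hmax.
      pose proof (gamma_pos m); pose proof (mul_exp_gt _ ((rho - b) * gamma m) Hq ltac:(nra)); lra. }
  rewrite (proj2 (Nat.eqb_neq v 1) Hv1), Rplus_0_r; apply side_hub_wt_le; lia.
Qed.

End GadgetCost.

(** * The hard distribution *)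

Lemma sumR_at_most_one_large (c : nat -> R) l be : NoDup l -> 0 <= be ->
  (forall j, In j l -> c j <= 1) ->
  (forall j j', In j l -> In j' l -> be < c j -> be < c j' -> j = j') ->
  sumR c l <= 1 + INR (length l) * be.
Proof.
  induction l as [|j l IH]; intros Hnd Hbe Hle1 Huniq; [unfold sumR; simpl; lra|].
  inversion Hnd as [|? ? Hj Hnd']; subst.
  unfold sumR; cbn [map fold_right length]; fold (sumR c l); rewrite S_INR.
  destruct (Rlt_or_le be (c j)) as [Hlarge|Hsmall].
  - assert (sumR c l <= INR (length l) * be).
    { rewrite <- sumR_const; apply sumR_le; intros y Hy.
      destruct (Rlt_or_le be (c y)) as [Hy'|]; [|auto].
      exfalso; apply Hj; rewrite (Huniq j y); simpl; auto. }
    specialize (Hle1 j (or_introl eq_refl)); lra.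
  - assert (sumR c l <= 1 + INR (length l) * be)
      by (apply IH; auto; intros; [apply Hle1 | apply Huniq]; simpl; auto).
    lra.
Qed.

Definition sub_len (k : nat) (d : R) : R := d / (2 * INR k).
Definition sub_start (k : nat) (a d : R) (j : nat) : R := a + 2 * INR j * sub_len k d.

Definition sub_gadget (m k : nat) (a d : R) (j : nat) : Inst :=
  gadget m (sub_start k a d j) (sub_start k a d j + sub_len k d).

Fixpoint nested_dist (m k : nat) (a d : R) (T : nat) : list (R * list Inst) :=
  match T with
  | O => [(1, [])]
  | S T' =>
    flat_map (fun j =>
        map (fun pxs => (fst pxs / INR k, sub_gadget m k a d j :: snd pxs))
          (nested_dist m k (sub_start k a d j) (sub_len k d) T'))
      (seq 0 k)
  end.

Fixpoint online_total (ad : bool) (l : list Inst -> R) (xs : list Inst) : R :=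
  match xs with
  | [] => 0
  | x :: xs' => cost ad (l []) x + online_total ad (fun h => l (x :: h)) xs'
  end.

Lemma learner_total_online {Omega : Type} ad (L : list Inst -> Omega -> R) xs w :
  learner_total ad L xs w = online_total ad (fun h => L h w) xs.
Proof.
  revert L; induction xs as [|x xs IH]; intro L; [reflexivity|].
  unfold learner_total; cbn [length seq map fold_right online_total].
  rewrite <- seq_shift, map_map, <- (IH (fun h w => L (x :: h) w)); reflexivity.
Qed.

Lemma online_total_bounds ad l xs : (forall h, 0 <= l h <= 1) ->
  (forall x, In x xs -> forall rho, 0 <= rho <= 1 -> 0 <= cost ad rho x <= 1) ->
  0 <= online_total ad l xs <= INR (length xs).
Proof.
  revert l; induction xs as [|x xs IH]; intros l Hl Hcost; cbn [online_total length]; [simpl; lra|].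
  rewrite S_INR; pose proof (Hcost x (or_introl eq_refl) (l []) (Hl [])).
  pose proof (IH (fun h => l (x :: h)) (fun h => Hl (x :: h)) (fun y Hy => Hcost y (or_intror Hy))).
  lra.
Qed.

Section NestedDistribution.
Variable k : nat.
Hypothesis Hk : (1 <= k)%nat.

Lemma INR_k_pos : 0 < INR k.
Proof. apply lt_0_INR; lia. Qed.

Lemma sub_len_pos d : 0 < d -> 0 < sub_len k d.
Proof. intro Hd; pose proof INR_k_pos; apply Rdiv_lt_0_compat; lra. Qed.

Lemma sub_interval_bounds a d j : 0 < d -> (j < k)%nat ->
  a <= sub_start k a d j /\ sub_start k a d j + sub_len k d <= a + d.
Proof.
  intros Hd Hj. pose proof (sub_len_pos d Hd). pose proof (pos_INR j).
  assert (Hlen : 2 * INR k * sub_len k d = d) by (unfold sub_len; field; pose proof INR_k_pos; lra).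
  assert (INR j + 1 <= INR k) by (rewrite <- S_INR; apply le_INR; lia).
  unfold sub_start; split; nra.
Qed.

Lemma sub_intervals_disjoint a d j j' rho : 0 < d ->
  sub_start k a d j <= rho <= sub_start k a d j + sub_len k d ->
  sub_start k a d j' <= rho <= sub_start k a d j' + sub_len k d -> j = j'.
Proof.
  intros Hd Hj Hj'. pose proof (sub_len_pos d Hd). unfold sub_start in *.
  assert (H1 : 2 * INR j * sub_len k d < (2 * INR j' + 2) * sub_len k d) by lra.
  assert (H2 : 2 * INR j' * sub_len k d < (2 * INR j + 2) * sub_len k d) by lra.
  apply Rmult_lt_reg_r in H1, H2; auto.
  assert (Hlt : INR j < INR (S j')) by (rewrite S_INR; lra).
  assert (Hlt' : INR j' < INR (S j)) by (rewrite S_INR; lra).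
  apply INR_lt in Hlt, Hlt'; lia.
Qed.

Lemma nested_dist_mass m a d T : sumR fst (nested_dist m k a d T) = 1.
Proof.
  revert a d; induction T as [|T IH]; intros a d; [unfold sumR; simpl; ring|].
  cbn [nested_dist]; rewrite sumR_flat_map, (sumR_ext _ (fun _ => / INR k)).
  - rewrite sumR_const, length_seq; apply Rinv_r; pose proof INR_k_pos; lra.
  - intros j _; rewrite sumR_map; cbn [fst].
    rewrite (sumR_ext _ (fun x => / INR k * fst x)) by (intros; unfold Rdiv; ring).
    rewrite sumR_scal, IH; ring.
Qed.

Lemma nested_dist_support m a d T p xs : 0 <= a -> 0 < d -> a + d <= 1 ->
  In (p, xs) (nested_dist m k a d T) ->
  0 <= p /\ length xs = T /\
  forall x, In x xs -> exists a' b', 0 <= a' <= 1 /\ 0 <= b' <= 1 /\ x = gadget m a' b'.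
Proof.
  revert a d p xs; induction T as [|T IH]; intros a d p xs Ha Hd Had Hin.
  - destruct Hin as [E|[]]; inversion E; subst; split; [lra | split; [reflexivity | intros x []]].
  - cbn [nested_dist] in Hin; apply in_flat_map in Hin as [j [Hj Hin]]; apply in_seq in Hj.
    apply in_map_iff in Hin as [[p' xs'] [E Hin]]; inversion E; subst; clear E.
    destruct (sub_interval_bounds a d j Hd ltac:(lia)) as [S1 S2].
    pose proof (sub_len_pos d Hd).
    destruct (IH (sub_start k a d j) (sub_len k d) p' xs' ltac:(lra) ltac:(lra) ltac:(lra) Hin) as (Hp & Hlen & Hgad).
    split; [|split; [simpl; auto|]].
    + unfold Rdiv; apply Rmult_le_pos; [exact Hp|]; left; apply Rinv_0_lt_compat, INR_k_pos.
    + intros x [<-|Hx]; [|auto]. eexists _, _; split; [|split; [|reflexivity]]; lra.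
Qed.

Lemma nested_dist_consistent m ad a d T p xs : 0 <= a -> 0 < d -> a + d <= 1 ->
  In (p, xs) (nested_dist m k a d T) ->
  exists rho, a < rho < a + d /\ forall x, In x xs -> cost ad rho x = 1.
Proof.
  revert a d p xs; induction T as [|T IH]; intros a d p xs Ha Hd Had Hin.
  - destruct Hin as [E|[]]; inversion E; subst. exists (a + d / 2); split; [lra | intros x []].
  - cbn [nested_dist] in Hin; apply in_flat_map in Hin as [j [Hj Hin]]; apply in_seq in Hj.
    apply in_map_iff in Hin as [[p' xs'] [E Hin]]; inversion E; subst; clear E.
    destruct (sub_interval_bounds a d j Hd ltac:(lia)) as [S1 S2].
    pose proof (sub_len_pos d Hd).
    destruct (IH (sub_start k a d j) (sub_len k d) p' xs' ltac:(lra) ltac:(lra) ltac:(lra) Hin) as (rho & Hrho & Hall).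
    exists rho; split; [lra|]. intros x [<-|Hx]; [|auto].
    apply gadget_cost_inside; lra.
Qed.

Lemma sub_gadget_params a d j : 0 <= a -> 0 < d -> a + d <= 1 -> (j < k)%nat ->
  0 <= sub_start k a d j <= 1 /\ 0 <= sub_start k a d j + sub_len k d <= 1.
Proof.
  intros Ha Hd Had Hj; pose proof (sub_len_pos d Hd); pose proof (sub_interval_bounds a d j Hd Hj); lra.
Qed.

Lemma sub_gadget_costly_inside m ad a d j rho : 0 <= a -> 0 < d -> a + d <= 1 -> (j < k)%nat ->
  0 <= rho -> 3 * leaf_wt m < cost ad rho (sub_gadget m k a d j) ->
  sub_start k a d j <= rho <= sub_start k a d j + sub_len k d.
Proof.
  intros Ha Hd Had Hj Hr Hcost; destruct (sub_gadget_params a d j Ha Hd Had Hj) as [Hs Hs'].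
  assert (Hout : ~ (rho < sub_start k a d j \/ sub_start k a d j + sub_len k d < rho)).
  { intro Hout; pose proof (gadget_cost_outside m _ _ ad rho Hs Hs' Hr Hout).
    unfold sub_gadget in Hcost; lra. }
  split; apply Rnot_lt_le; intro; apply Hout; [left | right]; assumption.
Qed.

Lemma first_step_average m ad a d rho : (1 <= m)%nat ->
  0 <= a -> 0 < d -> a + d <= 1 -> 0 <= rho <= 1 ->
  / INR k * sumR (fun j => cost ad rho (sub_gadget m k a d j)) (seq 0 k) <= / INR k + 3 * leaf_wt m.
Proof.
  intros Hm Ha Hd Had Hr. pose proof INR_k_pos. pose proof (leaf_wt_pos m).
  assert (Hsum : sumR (fun j => cost ad rho (sub_gadget m k a d j)) (seq 0 k)
                   <= 1 + INR k * (3 * leaf_wt m)).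
  { rewrite <- (length_seq k 0) at 2. apply sumR_at_most_one_large; [apply seq_NoDup | lra | |].
    - intros j Hj; apply in_seq in Hj; destruct (sub_gadget_params a d j Ha Hd Had ltac:(lia)).
      apply gadget_cost_range; auto; lra.
    - intros j j' Hj Hj' Hcj Hcj'; apply in_seq in Hj, Hj'.
      apply (sub_intervals_disjoint a d j j' rho Hd);
        apply (sub_gadget_costly_inside m ad); auto; lia || lra. }
  apply Rle_trans with (/ INR k * (1 + INR k * (3 * leaf_wt m))).
  - apply Rmult_le_compat_l; [left; apply Rinv_0_lt_compat|]; lra.
  - right; field; lra.
Qed.

Lemma nested_dist_online m ad a d T (l : list Inst -> R) : (1 <= m)%nat ->
  0 <= a -> 0 < d -> a + d <= 1 -> (forall h, 0 <= l h <= 1) ->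
  sumR (fun pxs => fst pxs * online_total ad l (snd pxs)) (nested_dist m k a d T)
    <= INR T * (/ INR k + 3 * leaf_wt m).
Proof.
  intro Hm; revert a d l; induction T as [|T IH]; intros a d l Ha Hd Had Hl; [unfold sumR; simpl; lra|].
  pose proof (sub_len_pos d Hd). pose proof INR_k_pos.
  set (be := / INR k + 3 * leaf_wt m).
  cbn [nested_dist]; rewrite sumR_flat_map.
  apply Rle_trans with (sumR (fun j => / INR k * cost ad (l []) (sub_gadget m k a d j) +
                                      / INR k * (INR T * be)) (seq 0 k)).
  - apply sumR_le; intros j Hj; apply in_seq in Hj.
    destruct (sub_interval_bounds a d j Hd ltac:(lia)).
    rewrite sumR_map; cbn [fst snd online_total].
    rewrite (sumR_ext _ (fun pxs => (/ INR k * cost ad (l []) (sub_gadget m k a d j)) * fst pxs +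
               / INR k * (fst pxs * online_total ad (fun h => l (sub_gadget m k a d j :: h)) (snd pxs))))
      by (intros; unfold Rdiv; ring).
    rewrite sumR_lin, nested_dist_mass, Rmult_1_r.
    apply Rplus_le_compat_l, Rmult_le_compat_l; [left; apply Rinv_0_lt_compat; lra|].
    apply IH; auto; lra.
  - rewrite sumR_lin, sumR_const, length_seq, S_INR.
    pose proof (first_step_average m ad a d (l []) Hm Ha Hd Had (Hl [])) as Hfirst; fold be in Hfirst.
    replace (/ INR k * (INR k * (INR T * be))) with (INR T * be) by (field; lra).
    lra.
Qed.

End NestedDistribution.

(** * Regret *)

Section Expectation.
Context {Omega : Type}.

Lemma bounded_fun_add (f g : Omega -> R) :
  bounded_fun f -> bounded_fun g -> bounded_fun (fun w => f w + g w).
Proof.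
  intros [M1 H1] [M2 H2]; exists (M1 + M2); intro w.
  eapply Rle_trans; [apply Rabs_triang|]; specialize (H1 w); specialize (H2 w); lra.
Qed.

Lemma bounded_fun_scal c (f : Omega -> R) : bounded_fun f -> bounded_fun (fun w => c * f w).
Proof.
  intros [M H]; exists (Rabs c * M); intro w; rewrite Rabs_mult.
  apply Rmult_le_compat_l; [apply Rabs_pos | apply H].
Qed.

Lemma bounded_fun_weighted_sum {B : Type} (F : R * B -> Omega -> R) D :
  (forall pxs, In pxs D -> bounded_fun (F pxs)) ->
  bounded_fun (fun w => sumR (fun pxs => fst pxs * F pxs w) D).
Proof.
  induction D as [|p D IH]; intro HB; [exists 0; intro; unfold sumR; simpl; rewrite Rabs_R0; lra|].
  apply (bounded_fun_add (fun w => fst p * F p w) (fun w => sumR (fun pxs => fst pxs * F pxs w) D)).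
  - apply bounded_fun_scal, HB; left; auto.
  - apply IH; intros; apply HB; right; auto.
Qed.

Lemma expectation_weighted_sum {B : Type} (E : (Omega -> R) -> R) (F : R * B -> Omega -> R) D :
  is_expectation E -> (forall pxs, In pxs D -> bounded_fun (F pxs)) ->
  E (fun w => sumR (fun pxs => fst pxs * F pxs w) D) = sumR (fun pxs => fst pxs * E (F pxs)) D.
Proof.
  intros (Hconst & Hadd & Hscal & _); induction D as [|p D IH]; intro HB; [apply (Hconst 0)|].
  change (E (fun w => fst p * F p w + sumR (fun pxs => fst pxs * F pxs w) D) =
          fst p * E (F p) + sumR (fun pxs => fst pxs * E (F pxs)) D).
  rewrite (Hadd (fun w => fst p * F p w) (fun w => sumR (fun pxs => fst pxs * F pxs w) D)).
  - rewrite Hscal, IH by (intros; apply HB; simpl; auto); reflexivity.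
  - apply bounded_fun_scal, HB; left; auto.
  - apply bounded_fun_weighted_sum; intros; apply HB; right; auto.
Qed.

End Expectation.

Lemma Rsup_lub E s : is_lub E s -> Rsup E = s.
Proof.
  intro Hs; unfold Rsup; apply is_lub_u with E; [apply epsilon_spec; exists s|]; exact Hs.
Qed.

Lemma best_fixed_ge ad xs rho : 0 <= rho <= 1 ->
  (forall x, In x xs -> forall rho', 0 <= rho' <= 1 -> cost ad rho' x <= 1) ->
  (forall x, In x xs -> cost ad rho x = 1) -> INR (length xs) <= best_fixed ad xs.
Proof.
  intros Hr Hle1 Hall.
  set (S := fun s => exists rho', 0 <= rho' <= 1 /\ s = sumR (cost ad rho') xs).
  assert (Hrho : sumR (cost ad rho) xs = INR (length xs))
    by (rewrite (sumR_ext _ (fun _ => 1)), sumR_const by auto; ring).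
  destruct (completeness S) as [s Hs].
  - exists (INR (length xs)); intros s [rho' [Hr' ->]].
    rewrite <- Rmult_1_r, <- sumR_const; apply sumR_le; intros; apply Hle1; auto.
  - exists (INR (length xs)), rho; auto.
  - change (INR (length xs) <= Rsup S).
    rewrite (Rsup_lub S s Hs); apply (proj1 Hs); exists rho; auto.
Qed.

Lemma regret_lower_bound {Omega : Type} ad T D (E : (Omega -> R) -> R) L B :
  0 < INR T -> is_expectation E -> sumR fst D = 1 ->
  (forall pxs, In pxs D -> 0 <= fst pxs /\ INR T <= best_fixed ad (snd pxs) /\
                           bounded_fun (learner_total ad L (snd pxs))) ->
  (forall w, sumR (fun pxs => fst pxs * learner_total ad L (snd pxs) w) D <= INR T * B) ->
  expected_regret ad T D E L >= 1 - B.
Proof.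
  intros HT HE Hmass HD Hlearn.
  assert (Hbest : INR T <= sumR (fun pxs => fst pxs * best_fixed ad (snd pxs)) D).
  { rewrite <- (Rmult_1_r (INR T)), <- Hmass, <- sumR_scal.
    apply sumR_le; intros pxs Hin; destruct (HD pxs Hin) as (Hp & Hb & _); nra. }
  assert (Hexp : sumR (fun pxs => fst pxs * E (learner_total ad L (snd pxs))) D <= INR T * B).
  { rewrite <- (expectation_weighted_sum E (fun pxs => learner_total ad L (snd pxs))) by
      (auto; intros; apply HD; auto).
    destruct HE as (Hconst & _ & _ & Hmono); rewrite <- (Hconst (INR T * B)).
    apply Hmono; [| exists (Rabs (INR T * B)); intro; lra | exact Hlearn].
    apply bounded_fun_weighted_sum; intros; apply HD; auto. }
  unfold expected_regret; fold (sumR (fun pxs => fst pxs *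
    (best_fixed ad (snd pxs) - E (learner_total ad L (snd pxs)))) D).
  rewrite (sumR_ext _ (fun pxs => 1 * (fst pxs * best_fixed ad (snd pxs)) +
                                 (-1) * (fst pxs * E (learner_total ad L (snd pxs)))))
    by (intros; ring).
  rewrite sumR_lin. apply Rle_ge.
  apply Rle_trans with (/ INR T * (INR T - INR T * B)).
  - right; field; lra.
  - apply Rmult_le_compat_l; [left; apply Rinv_0_lt_compat; exact HT | lra].
Qed.

Definition empty_inst : Inst := mkInst 0 (fun _ => 0) (fun _ _ => false).

Lemma empty_dist_valid ad n T : valid_dist ad n T [(1, repeat empty_inst T)].
Proof.
  split; [|simpl; ring].
  intros p xs [E|[]]; inversion E; subst.
  split; [lra | split; [apply repeat_length|]].
  intros x Hx; apply repeat_spec in Hx; subst x.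
  split; [split; [|split]; simpl; intros; lia | split; [simpl; lia | intros; unfold cost; simpl; lra]].
Qed.

Lemma online_total_empty ad l T : online_total ad l (repeat empty_inst T) = 0.
Proof.
  revert l; induction T as [|T IH]; intro l; [reflexivity|].
  cbn [repeat online_total]; rewrite IH; unfold cost; simpl; ring.
Qed.

Lemma empty_dist_regret {Omega : Type} ad T (E : (Omega -> R) -> R) L :
  is_expectation E -> expected_regret ad T [(1, repeat empty_inst T)] E L = 0.
Proof.
  intros (Hconst & _).
  assert (Hsum : forall rho, sumR (cost ad rho) (repeat empty_inst T) = 0)
    by (intro; apply sumR_zero; intros x Hx; apply repeat_spec in Hx; subst; reflexivity).
  unfold sumR in Hsum.
  assert (Hbest : best_fixed ad (repeat empty_inst T) = 0).
  { apply Rsup_lub; split.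
    - intros s [rho [_ ->]]; rewrite Hsum; lra.
    - intros b Hb; apply Hb; exists 0; split; [lra|]; rewrite Hsum; reflexivity. }
  assert (Hlearn : learner_total ad L (repeat empty_inst T) = fun _ => 0)
    by (apply functional_extensionality; intro w; rewrite learner_total_online; apply online_total_empty).
  unfold expected_regret; cbn [map fold_right fst snd]; rewrite Hbest, Hlearn, Hconst; ring.
Qed.

Lemma nested_dist_valid ad m n T : (1 <= m)%nat -> (gadget_size m <= n)%nat ->
  valid_dist ad n T (nested_dist m (S n) 0 1 T).
Proof.
  intros Hm Hn; split; [|apply nested_dist_mass; lia].
  intros p xs Hin.
  destruct (nested_dist_support (S n) ltac:(lia) m 0 1 T p xs ltac:(lra) ltac:(lra) ltac:(lra) Hin)
    as (Hp & Hlen & Hgad).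
  split; [exact Hp | split; [exact Hlen|]].
  intros x Hx; destruct (Hgad x Hx) as (a & b & Ha & Hb & ->).
  split; [apply gadget_wf | split; [exact Hn|]].
  intros rho Hr; apply gadget_cost_range; auto; lra.
Qed.

Lemma nested_dist_regret {Omega : Type} ad m k T (E : (Omega -> R) -> R) L :
  (1 <= m)%nat -> (1 <= k)%nat -> (1 <= T)%nat ->
  is_expectation E -> (forall h w, 0 <= L h w <= 1) ->
  expected_regret ad T (nested_dist m k 0 1 T) E L >= 1 - (/ INR k + 3 * leaf_wt m).
Proof.
  intros Hm Hk HT HE HL.
  apply regret_lower_bound; [apply lt_0_INR; lia | exact HE | apply nested_dist_mass; exact Hk | |].
  - intros [p xs] Hin; cbn [fst snd].
    destruct (nested_dist_support k Hk m 0 1 T p xs ltac:(lra) ltac:(lra) ltac:(lra) Hin)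
      as (Hp & Hlen & Hgad).
    assert (Hcost : forall x, In x xs -> forall rho, 0 <= rho <= 1 -> 0 <= cost ad rho x <= 1).
    { intros x Hx rho Hr; destruct (Hgad x Hx) as (a & b & Ha & Hb & ->).
      apply gadget_cost_range; auto; lra. }
    split; [exact Hp | split].
    + destruct (nested_dist_consistent k Hk m ad 0 1 T p xs ltac:(lra) ltac:(lra) ltac:(lra) Hin)
        as (rho & Hr & Hall).
      rewrite <- Hlen; apply (best_fixed_ge ad xs rho); [lra | | exact Hall].
      intros x Hx rho' Hr'; apply Hcost; auto.
    + exists (INR T); intro w; rewrite learner_total_online, <- Hlen.
      pose proof (online_total_bounds ad (fun h => L h w) xs (fun h => HL h w) Hcost).
      rewrite Rabs_right; lra.
  - intro w; rewrite (sumR_ext _ (fun pxs => fst pxs * online_total ad (fun h => L h w) (snd pxs)))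
      by (intros; rewrite learner_total_online; reflexivity).
    apply nested_dist_online; auto; lra.
Qed.

Lemma regret_slack_le n : (12 < n)%nat ->
  / INR (S n) + 3 * leaf_wt ((n - 6) / 2) <= 13 / (INR n + 1).
Proof.
  intro Hn. set (m := ((n - 6) / 2)%nat).
  assert (Hdiv := Nat.div_mod_eq (n - 6) 2); assert (Hmod := Nat.mod_upper_bound (n - 6) 2 ltac:(lia)).
  assert (Hnm : INR n + 1 <= 4 * INR m + 8).
  { replace (4 * INR m + 8) with (INR (4 * m + 7) + 1) by (rewrite plus_INR, mult_INR; simpl; ring).
    apply Rplus_le_compat_r, le_INR; fold m in Hdiv; lia. }
  pose proof (pos_INR n); pose proof (pos_INR m).
  assert (3 * leaf_wt m <= 12 / (INR n + 1)).
  { unfold leaf_wt; apply Rmult_le_reg_r with ((INR m + 2) * (INR n + 1)); [nra|].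
    unfold Rdiv; field_simplify; lra. }
  rewrite S_INR; unfold Rdiv in *; lra.
Qed.

Lemma regret_slack_cv : Un_cv (fun n => 13 / (INR n + 1)) 0.
Proof.
  intros eps Heps. destruct (archimed_cor1 (eps / 13)) as [N [HN HN0]]; [lra|].
  exists N; intros n Hn; unfold R_dist; rewrite Rminus_0_r.
  pose proof (pos_INR n).
  rewrite Rabs_right by (apply Rle_ge, Rlt_le, Rdiv_lt_0_compat; lra).
  assert (HNn : INR N <= INR n) by (apply le_INR; lia).
  assert (HN1 : 0 < INR N) by (apply lt_0_INR; lia).
  assert (13 < eps * INR N).
  { apply Rmult_lt_compat_r with (r := INR N) in HN; auto; rewrite Rinv_l in HN by lra; lra. }
  apply Rmult_lt_reg_r with (INR n + 1); [lra|].
  unfold Rdiv; rewrite Rmult_assoc, Rinv_l by lra; nra.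
Qed.

Theorem mainTheorem12 :
  forall adaptive : bool,
  exists eps : nat -> R, Un_cv eps 0 /\
  forall n T : nat, (1 <= T)%nat ->
  exists D : list (R * list Inst), valid_dist adaptive n T D /\
  forall (Omega : Type) (E : (Omega -> R) -> R) (L : list Inst -> Omega -> R),
    is_expectation E ->
    (forall h w, 0 <= L h w <= 1) ->
    expected_regret adaptive T D E L >= 1 - eps n.
Proof.
  intro ad. exists (fun n => 13 / (INR n + 1)); split; [exact regret_slack_cv|].
  intros n T HT; pose proof (pos_INR n).
  destruct (Nat.le_gt_cases n 12) as [Hsmall | Hlarge].
  - exists [(1, repeat empty_inst T)]; split; [apply empty_dist_valid|].
    intros Omega E L HE _; rewrite empty_dist_regret by exact HE.
    assert (INR n <= 12) by (replace 12 with (INR 12) by (simpl; ring); apply le_INR; exact Hsmall).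
    assert (1 <= 13 / (INR n + 1))
      by (apply Rmult_le_reg_r with (INR n + 1); [lra|]; unfold Rdiv; rewrite Rmult_assoc, Rinv_l; lra).
    lra.
  - set (m := ((n - 6) / 2)%nat).
    assert (Hm : (3 <= m)%nat) by (unfold m; apply Nat.div_le_lower_bound; lia).
    assert (Hsize : (gadget_size m <= n)%nat)
      by (pose proof (Nat.Div0.mul_div_le (n - 6) 2); unfold gadget_size, m in *; lia).
    exists (nested_dist m (S n) 0 1 T); split; [apply nested_dist_valid; lia|].
    intros Omega E L HE HL.
    pose proof (nested_dist_regret ad m (S n) T E L ltac:(lia) ltac:(lia) HT HE HL).
    pose proof (regret_slack_le n Hlarge) as Hslack; fold m in Hslack; lra.
Qed.
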